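(* Let $n,t\geq 3$ be integers. If $t$ is odd, then for all $\mathbf u,\mathbf v\in D_{n,t-2}$ and $\mathbf w\in D^*_{n,t-2}$ the sets $E_1(\mathbf u)$, $E_2(\mathbf v)$, $E_3(\mathbf w)$ are pairwise disjoint. If $t$ is even, then for all $\mathbf u,\mathbf v,\mathbf w\in D^*_{n,t-2}$ the sets $E_1(\mathbf u)$, $E_2(\mathbf v)$, $E_3(\mathbf w)$ and $\{1^{t-2}\alpha1:\alpha\in[n]\}$ are pairwise disjoint. Moreover, for each $i\in\{1,2,3\}$, $E_i(\mathbf u)\cap E_i(\mathbf v)=\emptyset$ whenever $\mathbf u\neq\mathbf v$ are in the domain on which $E_i$ is defined.
   Context: For a positive integer $n$ let $[n]=\{1,\dots,n\}$; vertices of the Sierpiński graph $S(K_n,t)$ are words in $[n]^t$. Write $a^k$ for the word consisting of $k$ copies of the letter $a$, and $D^*_{n,s}=D_{n,s}\setminus\{1^s\}$. The sets $D_{n,t}\subseteq[n]^t$ are defined recursively: $D_{n,1}=\{1\}$, $D_{n,2}=\{11,21,\dots,n1\}$. For $t\geq 3$ and $\mathbf v=v_1\cdots v_{t-2}\in D_{n,t-2}$ put $E_1(\mathbf v)=\{v_1\cdots v_{t-2}\alpha\alpha:\alpha\in[n]\}$, $E_2(\mathbf v)=\{v_1\cdots v_{t-3}\alpha\beta v_{t-2}:\alpha,\beta\in[n]\setminus\{v_{t-2}\}\}$, and, if $\mathbf v$ is not a constant word, let $\ell$ be the largest index in $[t-3]$ with $v_\ell\neq v_{\ell+1}$ and put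 $E_3(\mathbf v)=\{v_1\cdots v_{\ell-1}v_{\ell+1}v_\ell^{\,t-\ell-2}\alpha v_\ell:\alpha\in[n]\setminus\{v_\ell\}\}$. If $t\geq 3$ is odd, $D_{n,t}=E_1(1^{t-2})\cup E_2(1^{t-2})\cup\bigcup_{\mathbf v\in D_{n,t-2}\setminus\{1^{t-2}\}}\big(E_1(\mathbf v)\cup E_2(\mathbf v)\cup E_3(\mathbf v)\big)$. If $t\geq 4$ is even, $D_{n,t}=\{1^{t-2}\alpha1:\alpha\in[n]\}\cup\bigcup_{\mathbf v\in D_{n,t-2}\setminus\{1^{t-2}\}}\big(E_1(\mathbf v)\cup E_2(\mathbf v)\cup E_3(\mathbf v)\big)$. (In this recursion $1^{t-2}\in D_{n,t-2}$ is the only constant word in $D_{n,t-2}$, so $E_3$ is applied only to non-constant words.) Here $E_1,E_2$ are defined on $D_{n,t-2}$ and $E_3$ on $D^*_{n,t-2}$. *)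

(* Words in [n]^t are represented as sequences of naturals
   (letters 1..n), sets of words as sequences (lists) of words. *)
From mathcomp Require Import all_boot.
Set Implicit Arguments. Unset Strict Implicit. Unset Printing Implicit Defensive.

Definition letters (n : nat) : seq nat := iota 1 n.

Definition cw (k a : nat) : seq nat := nseq k a.

Definition E1 (n : nat) (v : seq nat) : seq (seq nat) :=
  [seq v ++ [:: a; a] | a <- letters n].

Definition E2 (n : nat) (v : seq nat) : seq (seq nat) :=
  let x := last 0 v in
  let p := take (size v).-1 v in
  flatten [seq [seq p ++ [:: a; b; x] | b <- letters n & b != x] |
             a <- letters n & a != x].

(* 0-based index j = l - 1 of the largest l in [t-3] (= [size v - 1]) with
   v_l <> v_{l+1}; None if v is constant. *)
Definition lastchange (v : seq nat) : option nat :=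
  let js := [seq j <- iota 0 (size v).-1 | nth 0 v j != nth 0 v j.+1] in
  if js is [::] then None else Some (last 0 js).

(* E_3(v) = { v_1 ... v_{l-1} v_{l+1} v_l^{t-l-2} alpha v_l : alpha in [n] \ {v_l} }
   (t = size v + 2); only meaningful for non-constant v (empty otherwise). *)
Definition E3 (n : nat) (v : seq nat) : seq (seq nat) :=
  match lastchange v with
  | None => [::]
  | Some j =>
      let vl := nth 0 v j in
      let vl1 := nth 0 v j.+1 in
      let l := j.+1 in
      [seq take j v ++ [:: vl1] ++ cw (size v + 2 - l - 2) vl ++ [:: a; vl] |
         a <- letters n & a != vl]
  end.

Definition F (n k : nat) : seq (seq nat) :=
  [seq cw k 1 ++ [:: a; 1] | a <- letters n].

(* The recursive step, for t = k + 2 with prev = D_{n,k}. *)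
Definition Dstep (n k : nat) (prev : seq (seq nat)) : seq (seq nat) :=
  let rest := flatten [seq E1 n v ++ E2 n v ++ E3 n v | v <- prev & v != cw k 1] in
  if odd (k + 2) then E1 n (cw k 1) ++ E2 n (cw k 1) ++ rest
  else F n k ++ rest.

Fixpoint D (n t : nat) {struct t} : seq (seq nat) :=
  match t with
  | 0 => [::]
  | 1 => [:: [:: 1]]
  | S (S t2) =>
      match t2 with
      | 0 => [seq [:: a; 1] | a <- letters n]
      | S _ => Dstep n t2 (D n t2)
      end
  end.

Definition Dstar (n s : nat) : seq (seq nat) := [seq w <- D n s | w != cw s 1].

Definition disjoint_words (A B : seq (seq nat)) : Prop :=
  forall x, x \in A -> x \in B -> False.

(* Every word of the three families is read from its right end:
   - a word of E_1(u) is  u a a            (last two letters equal);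
   - a word of E_2(v) is  v' a b x         with a, b <> x, where v = v' x;
   - a word of E_3(w) is  p c d^(m+1) a d  with c, a <> d, where
                          w = p d c^(m+1)  is the decomposition of w at its
                          last change of letter;
   - a word of {1^k a 1} is 1^k a 1.
   After characterising membership in each family in this "right-end" form,
   each cross disjointness comes from comparing the last two or three letters,
   and each self-disjointness from recovering the parameter word from the
   common element.  The only global fact about D_{n,k} needed is that its
   words have length k (so are nonempty), which makes E_2 injective. *)
From mathcomp Require Import all_boot zify.
Set Implicit Arguments. Unset Strict Implicit. Unset Printing Implicit Defensive.

Section WordSurgery.
Context {T : eqType}.
Implicit Types (s p q : seq T) (a b c d : T).

Lemma rcons2_inj p q a b c d :
  rcons (rcons p a) c = rcons (rcons q b) d -> [/\ p = q, a = b & c = d].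
Proof. by move/rcons_inj => [/rcons_inj [-> ->] ->]. Qed.

Lemma rcons3_inj p q a1 a2 b1 b2 c1 c2 :
  rcons (rcons (rcons p a1) b1) c1 = rcons (rcons (rcons q a2) b2) c2 ->
  [/\ p = q, a1 = a2, b1 = b2 & c1 = c2].
Proof. by move/rcons_inj => [/rcons2_inj [-> -> ->] ->]. Qed.

Lemma nseqSr m c : nseq m.+1 c = rcons (nseq m c) c.
Proof. by elim: m => //= m ->. Qed.

Lemma rcons_take_last x0 s : s != [::] -> rcons (take (size s).-1 s) (last x0 s) = s.
Proof.
case/lastP: s => // s z _.
by rewrite size_rcons last_rcons -[X in take _ X]cats1 take_size_cat.
Qed.

(* A word ending in a maximal run of e's (preceded by a letter <> e) determines
   the run length and everything before it; this recovers w from E_3(w). *)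
Lemma rcons_nseq_inj p q c d e m k :
  rcons p c ++ nseq m e = rcons q d ++ nseq k e -> c != e -> d != e ->
  [/\ p = q, c = d & m = k].
Proof.
elim: m k => [|m IH] [|k].
- by rewrite !cats0 => /rcons_inj [-> ->].
- by rewrite cats0 nseqSr -rcons_cat => /rcons_inj [_ ->]; rewrite eqxx.
- by rewrite cats0 nseqSr -rcons_cat => /rcons_inj [_ ->] _; rewrite eqxx.
- rewrite !nseqSr -!rcons_cat => /rcons_inj [eq_pre] hc hd.
  by have [-> -> ->] := IH _ eq_pre hc hd.
Qed.

End WordSurgery.

Lemma sorted_leq_last (s : seq nat) y : sorted leq (rcons s y) -> all (leq^~ y) s.
Proof.
rewrite -rev_sorted rev_rcons /= => /order_path_min; rewrite all_rev; apply.
by move=> a b c /= hba hcb; apply: leq_trans hcb hba.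
Qed.

Lemma lastchange_spec v j : lastchange v = Some j ->
  [/\ j < (size v).-1, nth 0 v j != nth 0 v j.+1 &
      forall i, j < i < (size v).-1 -> nth 0 v i = nth 0 v i.+1].
Proof.
rewrite /lastchange; set js := filter _ _.
have in_js i : (i \in js) = (i < (size v).-1) && (nth 0 v i != nth 0 v i.+1).
  by rewrite mem_filter mem_iota add0n andbC.
have : sorted leq js by apply: sorted_filter; [exact: leq_trans | exact: iota_sorted].
case: js in_js => [//|y s] in_js js_sorted [<-].
have := mem_last y s; rewrite in_js => /andP [j_lt j_change].
split=> // i /andP [j_lt_i i_lt]; apply/eqP; apply: contraT => i_change.
have : i \in rcons (belast y s) (last y s) by rewrite -lastI in_js i_lt.
rewrite mem_rcons in_cons => /orP [/eqP i_eq | i_in]; first by rewrite i_eq ltnn in j_lt_i.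
move: js_sorted; rewrite lastI => /sorted_leq_last /allP /(_ _ i_in).
by rewrite leqNgt j_lt_i.
Qed.

Lemma lastchange_decomp w j : lastchange w = Some j ->
  w = rcons (take j w) (nth 0 w j) ++ nseq (size w - j.+1) (nth 0 w j.+1).
Proof.
move=> /lastchange_spec [j_lt _ tail_const].
rewrite -take_nth; last by lia.
rewrite -{1}(cat_take_drop j.+1 w); congr (_ ++ _).
apply: (@eq_from_nth _ 0); first by rewrite size_drop size_nseq.
rewrite size_drop => i lt_i; rewrite nth_drop nth_nseq lt_i.
elim: i lt_i => [|i IH] lt_i; first by rewrite addn0.
by rewrite -IH ?addnS; [symmetry; apply: tail_const; lia | lia].
Qed.

Lemma mem_E1 n u x : x \in E1 n u -> exists a, x = rcons (rcons u a) a.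
Proof. by move=> /mapP [a _ ->]; exists a; rewrite -!cats1 -catA. Qed.

Lemma mem_E2 n v x : x \in E2 n v -> exists a b, [/\ a != last 0 v, b != last 0 v &
  x = rcons (rcons (rcons (take (size v).-1 v) a) b) (last 0 v)].
Proof.
rewrite /E2 => /flattenP [s /mapP [a]]; rewrite mem_filter => /andP [a_ne _] ->.
move=> /mapP [b]; rewrite mem_filter => /andP [b_ne _] ->.
by exists a, b; split => //; rewrite -!cats1 -!catA.
Qed.

Lemma mem_E3 n w x : x \in E3 n w -> exists p c d m a,
  [/\ c != d, a != d, w = rcons p d ++ nseq m.+1 c &
      x = rcons (rcons (rcons p c ++ nseq m.+1 d) a) d].
Proof.
rewrite /E3; case lc: (lastchange w) => [j|] //.
move=> /mapP [a]; rewrite mem_filter => /andP [a_ne _] ->.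
have /lastchange_spec [j_lt j_change _] := lc.
have run_len : size w - j.+1 = (size w - j.+1).-1.+1 by lia.
exists (take j w), (nth 0 w j.+1), (nth 0 w j), (size w - j.+1).-1, a.
split; [by rewrite eq_sym | done | by rewrite -run_len; apply: lastchange_decomp |].
have -> : size w + 2 - j.+1 - 2 = (size w - j.+1).-1.+1 by lia.
by rewrite /cw -!cats1 -!catA.
Qed.

Lemma mem_F n k x : x \in F n k -> exists a, x = rcons (rcons (nseq k 1) a) 1.
Proof. by move=> /mapP [a _ ->]; exists a; rewrite /cw -!cats1 -!catA. Qed.

(* Cross disjointness: E_1-words end in two equal letters, E_2- and E_3-words
   in two distinct ones. *)
Lemma disjoint_E1_E2 n u v : disjoint_words (E1 n u) (E2 n v).
Proof.
move=> x /mem_E1 [a ->] /mem_E2 [b [c [_ c_ne]]] /rcons2_inj [_ a_c a_last].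
by rewrite -a_c a_last eqxx in c_ne.
Qed.

Lemma disjoint_E1_E3 n u w : disjoint_words (E1 n u) (E3 n w).
Proof.
move=> x /mem_E1 [a ->] /mem_E3 [p [c [d [m [b [_ b_ne _]]]]]] /rcons2_inj [_ a_b a_d].
by rewrite -a_b a_d eqxx in b_ne.
Qed.

(* In an E_2-word the third-to-last letter differs from the last one; in an
   E_3-word (and in 1^k a 1 for k > 0) they coincide. *)
Lemma disjoint_E2_E3 n v w : disjoint_words (E2 n v) (E3 n w).
Proof.
move=> x /mem_E2 [a [b [a_ne _ ->]]] /mem_E3 [p [c [d [m [e [_ _ _]]]]]].
rewrite nseqSr -rcons_cat => /rcons3_inj [_ a_d _ last_d].
by rewrite a_d last_d eqxx in a_ne.
Qed.

(* u a a = 1^k b 1 forces u = 1^k, which is excluded. *)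
Lemma disjoint_E1_F n k u : u != cw k 1 -> disjoint_words (E1 n u) (F n k).
Proof.
move=> u_ne x /mem_E1 [a ->] /mem_F [b] /rcons2_inj [u_eq _ _].
by rewrite u_eq eqxx in u_ne.
Qed.

Lemma disjoint_E2_F n k v : 0 < k -> disjoint_words (E2 n v) (F n k).
Proof.
case: k => // k _ x /mem_E2 [a [b [a_ne _ ->]]] /mem_F [c].
rewrite nseqSr => /rcons3_inj [_ a_one _ last_one].
by rewrite a_one last_one eqxx in a_ne.
Qed.

(* An E_3-word contains the letter c <> d before its final run of d's, while a
   word 1^k b 1 with final letter d = 1 has only 1's there. *)
Lemma disjoint_E3_F n k w : disjoint_words (E3 n w) (F n k).
Proof.
move=> x /mem_E3 [p [c [d [m [a [c_ne _ _ ->]]]]]] /mem_F [b] /rcons2_inj [run_eq _ d_one].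
have : c \in nseq k 1 by rewrite -run_eq mem_cat mem_rcons mem_head.
by rewrite mem_nseq => /andP [_ /eqP c_one]; rewrite c_one d_one eqxx in c_ne.
Qed.

(* Self-disjointness: the parameter word is recovered from any element
   (for E_2 the parameter must be nonempty: E_2([::]) = E_2([:: 0])). *)
Lemma disjoint_E1_E1 n u v : u != v -> disjoint_words (E1 n u) (E1 n v).
Proof.
move=> u_ne x /mem_E1 [a ->] /mem_E1 [b] /rcons2_inj [u_eq _ _].
by rewrite u_eq eqxx in u_ne.
Qed.

Lemma disjoint_E2_E2 n u v : u != [::] -> v != [::] -> u != v ->
  disjoint_words (E2 n u) (E2 n v).
Proof.
move=> u_nil v_nil u_ne x /mem_E2 [a [b [_ _ ->]]] /mem_E2 [c [d [_ _]]].
move=> /rcons3_inj [front_eq _ _ last_eq].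
by rewrite -(rcons_take_last 0 u_nil) -(rcons_take_last 0 v_nil) front_eq last_eq eqxx in u_ne.
Qed.

Lemma disjoint_E3_E3 n u v : u != v -> disjoint_words (E3 n u) (E3 n v).
Proof.
move=> u_ne x /mem_E3 [p [c [d [m [a [c_ne _ u_eq ->]]]]]].
move=> /mem_E3 [q [c' [d' [m' [b [c'_ne _ v_eq]]]]]] /rcons2_inj [run_eq _ d_eq].
rewrite -d_eq in run_eq c'_ne.
have [p_eq c_eq m_eq] := rcons_nseq_inj run_eq c_ne c'_ne.
by rewrite u_eq v_eq p_eq c_eq m_eq d_eq eqxx in u_ne.
Qed.

Lemma size_E n v x : 0 < size v -> x \in E1 n v ++ E2 n v ++ E3 n v ->
  size x = (size v).+2.
Proof.
move=> v_pos; rewrite !mem_cat => /or3P [/mem_E1 [a ->] | /mem_E2 [a [b [_ _ ->]]] |].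
- by rewrite !size_rcons.
- by rewrite !size_rcons size_takel ?leq_pred // prednK.
- move=> /mem_E3 [p [c [d [m [a [_ _ -> ->]]]]]].
  by rewrite !size_rcons !size_cat !size_rcons !size_nseq.
Qed.

Lemma size_D n k x : 0 < k -> x \in D n k -> size x = k.
Proof.
elim/ltn_ind: k x => -[|[|[|k]]] IH x //= _.
- by rewrite mem_seq1 => /eqP ->.
- by move=> /mapP [a _ ->].
rewrite /Dstep; set rest := flatten _.
have size_rest : x \in rest -> size x = k.+3.
  move=> /flattenP [s /mapP [v]]; rewrite mem_filter => /andP [_ v_in] ->.
  have v_size : size v = k.+1 by apply: IH.
  by move=> x_in; rewrite -v_size; apply: size_E x_in; rewrite v_size.
case: ifP => _; rewrite ?catA mem_cat => /orP [x_in | /size_rest //].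
- have := @size_E n (cw k.+1 1) x; rewrite size_nseq; apply=> //.
  by rewrite catA mem_cat x_in.
- by move: x_in => /mem_F [a ->]; rewrite !size_rcons size_nseq.
Qed.

(* Lemma 2.3. *)
Theorem lemma2p3 (n t : nat) : 3 <= n -> 3 <= t ->
  (odd t ->
    forall u v w, u \in D n (t - 2) -> v \in D n (t - 2) -> w \in Dstar n (t - 2) ->
      [/\ disjoint_words (E1 n u) (E2 n v),
          disjoint_words (E1 n u) (E3 n w) &
          disjoint_words (E2 n v) (E3 n w)]) /\
  (~~ odd t ->
    forall u v w, u \in Dstar n (t - 2) -> v \in Dstar n (t - 2) -> w \in Dstar n (t - 2) ->
      [/\ disjoint_words (E1 n u) (E2 n v),
          disjoint_words (E1 n u) (E3 n w),
          disjoint_words (E2 n v) (E3 n w) &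
       [/\
          disjoint_words (E1 n u) (F n (t - 2)),
          disjoint_words (E2 n v) (F n (t - 2)) &
          disjoint_words (E3 n w) (F n (t - 2))]]) /\
  (forall u v, u \in D n (t - 2) -> v \in D n (t - 2) -> u != v ->
      disjoint_words (E1 n u) (E1 n v) /\ disjoint_words (E2 n u) (E2 n v)) /\
  (forall u v, u \in Dstar n (t - 2) -> v \in Dstar n (t - 2) -> u != v ->
      disjoint_words (E3 n u) (E3 n v)).
Proof.
move=> _ t_ge3; have k_pos : 0 < t - 2 by lia.
have nonempty_D u : u \in D n (t - 2) -> u != [::].
  by move=> /(size_D k_pos) u_size; rewrite -size_eq0 u_size -lt0n.
split; [|split; [|split]].
- move=> _ u v w _ _ _.
  by split; [exact: disjoint_E1_E2 | exact: disjoint_E1_E3 | exact: disjoint_E2_E3].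
- move=> _ u v w; rewrite mem_filter => /andP [u_ne _] _ _.
  split; [exact: disjoint_E1_E2 | exact: disjoint_E1_E3 | exact: disjoint_E2_E3 |].
  by split; [exact: disjoint_E1_F | exact: disjoint_E2_F | exact: disjoint_E3_F].
- move=> u v u_in v_in u_ne; split; first exact: disjoint_E1_E1.
  by apply: disjoint_E2_E2 => //; apply: nonempty_D.
- by move=> u v _ _; apply: disjoint_E3_E3.
Qed.
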